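(* Let $G$ be a digraph with a fixed upward planar drawing and let $\mathcal{P}$ be a set of pairwise vertex disjoint directed paths in $G$. Then $\prec^*_{\mathcal{P}}$ is a partial order on $\mathcal{P}$.
   Context: An upward planar drawing of a digraph is a plane drawing (no edge crossings) in which every directed edge is a curve monotone increasing in the $y$-direction from tail to head. A path is identified with the set of points of $\mathbb{R}^2$ in its drawing. For a path $P$ with endpoints $(x,y)$, $(x',y')$, $y\le y'$, let $\mathrm{Right}(P):=\{(u,v)\in\mathbb{R}^2: y\le v\le y',\ u'<u \text{ for all } u' \text{ with } (u',v)\in P\}$. A point $p\notin P$ is to the right of $P$ if $p\in\mathrm{Right}(P)$. For vertex disjoint paths $P,Q$, write $Q\prec P$ if some point of $P$ is to the right of $Q$. $\prec^*$ is the transitive closure of $\prec$, and $\prec^*_{\mathcal{P}}$ is the transitive closure of $\prec$ restricted to the paths in $\mathcal{P}$. *)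

From Stdlib Require Import Reals List Relations RelationClasses.
Import ListNotations.
Open Scope R_scope.

Record digraph := {
  vert : Type;
  edge : Type;
  src : edge -> vert;
  tgt : edge -> vert;
  vert_finite : exists l : list vert, forall v, In v l;
  edge_finite : exists l : list edge, forall e, In e l
}.

Definition point := (R * R)%type.

Record upward_planar_drawing (G : digraph) := {
  pos : vert G -> point;
  crv : edge G -> R -> point;
  pos_inj : forall u v, pos u = pos v -> u = v;
  crv_src : forall e, crv e 0 = pos (src G e);
  crv_tgt : forall e, crv e 1 = pos (tgt G e);
  crv_cont : forall e t, 0 <= t <= 1 ->
     continuity_pt (fun s => fst (crv e s)) t /\
     continuity_pt (fun s => snd (crv e s)) t;
  crv_upward : forall e s t, 0 <= s -> s < t -> t <= 1 ->
     snd (crv e s) < snd (crv e t);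
  crv_noncross : forall e e' s t, e <> e' -> 0 <= s <= 1 -> 0 <= t <= 1 ->
     crv e s = crv e' t -> (s = 0 \/ s = 1) /\ (t = 0 \/ t = 1);
  crv_novertex : forall e v t, 0 < t < 1 -> crv e t <> pos v
}.

Arguments pos {G} _ _.
Arguments crv {G} _ _ _.

(* A (candidate) directed path: start vertex and list of successive edges. *)
Record dpath (G : digraph) := mkPath { pstart : vert G; pedges : list (edge G) }.
Arguments mkPath {G} _ _.
Arguments pstart {G} _.
Arguments pedges {G} _.

Fixpoint chain (G : digraph) (v : vert G) (es : list (edge G)) : Prop :=
  match es with
  | [] => True
  | e :: es' => src G e = v /\ chain G (tgt G e) es'
  end.

Definition pverts {G : digraph} (P : dpath G) : list (vert G) :=
  pstart P :: map (tgt G) (pedges P).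

Definition pend {G : digraph} (P : dpath G) : vert G :=
  last (map (tgt G) (pedges P)) (pstart P).

Definition is_dpath {G : digraph} (P : dpath G) : Prop :=
  chain G (pstart P) (pedges P) /\ NoDup (pverts P).

Definition vdisjoint {G : digraph} (P Q : dpath G) : Prop :=
  forall v, In v (pverts P) -> ~ In v (pverts Q).

Definition pts {G : digraph} (D : upward_planar_drawing G) (P : dpath G)
  (p : point) : Prop :=
  p = pos D (pstart P) \/
  exists e, In e (pedges P) /\ exists t, 0 <= t <= 1 /\ p = crv D e t.

Definition RightSet {G : digraph} (D : upward_planar_drawing G) (P : dpath G)
  (p : point) : Prop :=
  let y1 := snd (pos D (pstart P)) in
  let y2 := snd (pos D (pend P)) in
  Rmin y1 y2 <= snd p <= Rmax y1 y2 /\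
  forall q, pts D P q -> snd q = snd p -> fst q < fst p.

Definition right_of {G : digraph} (D : upward_planar_drawing G) (P : dpath G)
  (p : point) : Prop :=
  ~ pts D P p /\ RightSet D P p.

Definition prec {G : digraph} (D : upward_planar_drawing G) (Q P : dpath G)
  : Prop :=
  vdisjoint Q P /\ exists p, pts D P p /\ right_of D Q p.

Definition prec_in {G : digraph} (D : upward_planar_drawing G)
  (PP : dpath G -> Prop) (Q P : dpath G) : Prop :=
  PP Q /\ PP P /\ prec D Q P.

Definition prec_star_in {G : digraph} (D : upward_planar_drawing G)
  (PP : dpath G -> Prop) : relation (dpath G) :=
  clos_trans (dpath G) (prec_in D PP).

(* Every path of the drawing is the graph x = X(y) of a continuous function
   of the height y over the interval between its end heights, because it is
   glued from y-monotone arcs.  Q ≺ P says X_Q < X_P at some common height,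
   and for disjoint paths the intermediate value theorem turns this into
   X_Q < X_P at every common height.  In a ≺-cycle, the path M with the
   lowest top therefore sits strictly between its two neighbours at the
   height of that top, so it can be bypassed; the cycle shrinks to a loop
   P ≺ P, which vertex disjointness forbids. *)

From Stdlib Require Import Reals Lra Lia List Relations RelationClasses.
From Stdlib Require Import Classical IndefiniteDescription Ranalysis5.
Import ListNotations.
Open Scope R_scope.

Lemma continuity_pt_intro (f : R -> R) (y0 : R) :
  (forall eps, 0 < eps -> exists del, 0 < del /\
     forall y, Rabs (y - y0) < del -> Rabs (f y - f y0) < eps) ->
  continuity_pt f y0.
Proof.
  intros H eps Heps. destruct (H eps Heps) as [del [Hdel Hy]].
  exists del; split; [exact Hdel|]. intros y [_ Hyd]. exact (Hy y Hyd).
Qed.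

Lemma continuity_nonexpanding (f : R -> R) :
  (forall x y, Rabs (f x - f y) <= Rabs (x - y)) -> continuity f.
Proof.
  intros Hf y0. apply continuity_pt_intro. intros eps Heps.
  exists eps; split; [exact Heps|]. intros y Hy.
  exact (Rle_lt_trans _ _ _ (Hf y y0) Hy).
Qed.

Lemma Rmin_nonexpanding (c x y : R) : Rabs (Rmin c x - Rmin c y) <= Rabs (x - y).
Proof. unfold Rmin, Rabs; repeat destruct Rle_dec; repeat destruct Rcase_abs; lra. Qed.

Lemma Rmax_nonexpanding (c x y : R) : Rabs (Rmax c x - Rmax c y) <= Rabs (x - y).
Proof. unfold Rmax, Rabs; repeat destruct Rle_dec; repeat destruct Rcase_abs; lra. Qed.

Definition clamp (lo hi y : R) : R := Rmax lo (Rmin hi y).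

Lemma clamp_id (lo hi y : R) : lo <= y <= hi -> clamp lo hi y = y.
Proof. unfold clamp, Rmax, Rmin; intros; repeat destruct Rle_dec; lra. Qed.

Lemma clamp_in (lo hi y : R) : lo <= hi -> lo <= clamp lo hi y <= hi.
Proof. unfold clamp, Rmax, Rmin; intros; repeat destruct Rle_dec; lra. Qed.

Lemma clamp_nonexpanding (lo hi x y : R) :
  Rabs (clamp lo hi x - clamp lo hi y) <= Rabs (x - y).
Proof.
  unfold clamp. eapply Rle_trans; [apply Rmax_nonexpanding | apply Rmin_nonexpanding].
Qed.

Lemma continuity_sign_stable (f : R -> R) (lo hi y1 y2 : R) :
  continuity f -> (forall y, lo <= y <= hi -> f y <> 0) ->
  lo <= y1 <= hi -> lo <= y2 <= hi -> 0 < f y1 -> 0 < f y2.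
Proof.
  intros Hf Hnz H1 H2 Hpos.
  destruct (Rlt_le_dec 0 (f y2)) as [|Hneg]; [assumption|exfalso].
  assert (Hzero : exists z, Rmin y1 y2 <= z <= Rmax y1 y2 /\ f z = 0).
  { destruct (Rle_dec y1 y2) as [Hle|Hgt].
    - rewrite Rmin_left, Rmax_right by lra.
      destruct (IVT_cor f y1 y2 Hf Hle) as [z Hz]; [nra|]. exists z; exact Hz.
    - rewrite Rmin_right, Rmax_left by lra.
      destruct (IVT_cor f y2 y1 Hf) as [z Hz]; [lra|nra|]. exists z; exact Hz. }
  destruct Hzero as [z [Hz Hfz]]. apply (Hnz z); [|exact Hfz].
  pose proof (Rmin_glb _ _ _ (proj1 H1) (proj1 H2)).
  pose proof (Rmax_lub _ _ _ (proj2 H1) (proj2 H2)). lra.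
Qed.

Section IncreasingInverse.

Variables (h : R -> R) (lo hi : R).
Hypothesis h_incr : forall s t, lo <= s -> s < t -> t <= hi -> h s < h t.

Lemma increasing_le_inv (s t : R) :
  lo <= s <= hi -> lo <= t <= hi -> h s <= h t -> s <= t.
Proof.
  intros Hs Ht Hh. destruct (Rle_dec s t) as [|Hts]; [assumption|].
  specialize (h_incr t s); lra.
Qed.

Lemma increasing_le (s t : R) : lo <= s -> s <= t -> t <= hi -> h s <= h t.
Proof.
  intros Hs Hst Ht. destruct (Req_dec s t) as [->|Hne]; [lra|].
  left; apply h_incr; lra.
Qed.

Lemma continuity_clamped_inverse (tau : R -> R) :
  (forall y, lo <= tau y <= hi /\ h (tau y) = clamp (h lo) (h hi) y) ->
  continuity tau.
Proof.
  intros Htau y0. apply continuity_pt_intro. intros eps Heps.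
  destruct (Htau y0) as [T0 E0].
  assert (Hnear : forall d y, Rabs (y - y0) < d ->
            h (tau y0) - d < h (tau y) < h (tau y0) + d).
  { intros d y Hy. destruct (Htau y) as [_ E]. rewrite E, E0.
    pose proof (Rle_lt_trans _ _ _ (clamp_nonexpanding (h lo) (h hi) y y0) Hy) as Hc.
    apply Rabs_def2 in Hc. lra. }
  assert (Hlow : exists d, 0 < d /\ forall y, Rabs (y - y0) < d -> tau y0 - eps < tau y).
  { destruct (Rle_dec (tau y0 - eps / 2) lo) as [Hle|Hgt].
    - exists 1; split; [lra|]. intros y _. destruct (Htau y); lra.
    - exists (h (tau y0) - h (tau y0 - eps / 2)).
      split; [specialize (h_incr (tau y0 - eps / 2) (tau y0)); lra|].
      intros y Hy. destruct (Htau y) as [T _]. specialize (Hnear _ _ Hy).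
      assert (tau y0 - eps / 2 <= tau y) by (apply increasing_le_inv; lra). lra. }
  assert (Hup : exists d, 0 < d /\ forall y, Rabs (y - y0) < d -> tau y < tau y0 + eps).
  { destruct (Rle_dec hi (tau y0 + eps / 2)) as [Hle|Hgt].
    - exists 1; split; [lra|]. intros y _. destruct (Htau y); lra.
    - exists (h (tau y0 + eps / 2) - h (tau y0)).
      split; [specialize (h_incr (tau y0) (tau y0 + eps / 2)); lra|].
      intros y Hy. destruct (Htau y) as [T _]. specialize (Hnear _ _ Hy).
      assert (tau y <= tau y0 + eps / 2) by (apply increasing_le_inv; lra). lra. }
  destruct Hlow as [d1 [Hd1 Hlow]], Hup as [d2 [Hd2 Hup]].
  exists (Rmin d1 d2). split; [apply Rmin_pos; assumption|]. intros y Hy.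
  pose proof (Hlow y (Rlt_le_trans _ _ _ Hy (Rmin_l d1 d2))).
  pose proof (Hup y (Rlt_le_trans _ _ _ Hy (Rmin_r d1 d2))).
  apply Rabs_def1; lra.
Qed.

End IncreasingInverse.

Definition ygraph (S : point -> Prop) (a b : R) (X : R -> R) : Prop :=
  a <= b /\ continuity X /\
  forall p, S p <-> a <= snd p <= b /\ fst p = X (snd p).

Lemma ygraph_le (S : point -> Prop) (a b : R) (X : R -> R) : ygraph S a b X -> a <= b.
Proof. intros [H _]; exact H. Qed.

Lemma ygraph_fst (S : point -> Prop) (a b : R) (X : R -> R) (p : point) :
  ygraph S a b X -> S p -> fst p = X (snd p).
Proof. intros [_ [_ HS]] Hp. apply HS, Hp. Qed.

Lemma ygraph_snd (S : point -> Prop) (a b : R) (X : R -> R) (p : point) :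
  ygraph S a b X -> S p -> a <= snd p <= b.
Proof. intros [_ [_ HS]] Hp. apply HS, Hp. Qed.

Lemma ygraph_mem (S : point -> Prop) (a b : R) (X : R -> R) (y : R) :
  ygraph S a b X -> a <= y <= b -> S (X y, y).
Proof. intros [_ [_ HS]] Hy. apply HS. split; [exact Hy | reflexivity]. Qed.

Lemma ygraph_unique (S : point -> Prop) (a b z : R) (X1 X2 : R -> R) :
  ygraph S a b X1 -> ygraph S a b X2 -> a <= z <= b -> X1 z = X2 z.
Proof.
  intros H1 H2 Hz. exact (ygraph_fst _ _ _ _ _ H2 (ygraph_mem _ _ _ _ _ H1 Hz)).
Qed.

Lemma ygraph_point (S : point -> Prop) (p0 : point) :
  (forall p, S p <-> p = p0) -> ygraph S (snd p0) (snd p0) (fun _ => fst p0).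
Proof.
  intros HS. split; [lra|]. split; [apply continuity_const; intros ? ?; reflexivity|].
  intros [x y]; rewrite HS; destruct p0 as [x0 y0]; simpl. split.
  - intros E; injection E as -> ->; lra.
  - intros [Hy ->]. f_equal; lra.
Qed.

(* Written without a case split on [y <= b] so that continuity is compositional. *)
Lemma ygraph_glue (S S1 S2 : point -> Prop) (a b c : R) (X1 X2 : R -> R) :
  (forall p, S p <-> S1 p \/ S2 p) ->
  ygraph S1 a b X1 -> ygraph S2 b c X2 -> X1 b = X2 b ->
  ygraph S a c (fun y => X1 (Rmin b y) + (X2 (Rmax b y) - X2 b)).
Proof.
  intros HS [Hab [C1 G1]] [Hbc [C2 G2]] Hb.
  assert (Elow : forall y, y <= b -> X1 (Rmin b y) + (X2 (Rmax b y) - X2 b) = X1 y).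
  { intros y Hy. rewrite Rmin_right, Rmax_left by lra. lra. }
  assert (Ehigh : forall y, b <= y -> X1 (Rmin b y) + (X2 (Rmax b y) - X2 b) = X2 y).
  { intros y Hy. rewrite Rmin_left, Rmax_right by lra. lra. }
  split; [lra|]. split.
  - apply (continuity_plus (fun y => X1 (Rmin b y)) (fun y => X2 (Rmax b y) - X2 b)).
    + exact (continuity_comp (Rmin b) X1
               (continuity_nonexpanding _ (Rmin_nonexpanding b)) C1).
    + apply (continuity_minus (fun y => X2 (Rmax b y)) (fun _ => X2 b)).
      * exact (continuity_comp (Rmax b) X2
                 (continuity_nonexpanding _ (Rmax_nonexpanding b)) C2).
      * apply continuity_const; intros ? ?; reflexivity.
  - intros p. rewrite HS, G1, G2. split.
    + intros [[Hy Hx]|[Hy Hx]]; split; try lra.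
      * rewrite Elow by lra. exact Hx.
      * rewrite Ehigh by lra. exact Hx.
    + intros [Hy Hx]. destruct (Rle_dec (snd p) b).
      * left. rewrite Elow in Hx by lra. split; [lra|exact Hx].
      * right. rewrite Ehigh in Hx by lra. split; [lra|exact Hx].
Qed.

Definition edge_pts {G : digraph} (D : upward_planar_drawing G) (e : edge G)
  (p : point) : Prop :=
  exists t, 0 <= t <= 1 /\ p = crv D e t.

Lemma edge_ygraph {G : digraph} (D : upward_planar_drawing G) (e : edge G) :
  exists X, ygraph (edge_pts D e) (snd (crv D e 0)) (snd (crv D e 1)) X.
Proof.
  set (h := fun t => snd (crv D e t)).
  set (x := fun t => fst (crv D e t)).
  change (exists X, ygraph (edge_pts D e) (h 0) (h 1) X).
  assert (Hincr : forall s t, 0 <= s -> s < t -> t <= 1 -> h s < h t)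
    by (intros; apply crv_upward; assumption).
  assert (Hh01 : h 0 < h 1) by (apply Hincr; lra).
  assert (Hcont : forall t, 0 <= t <= 1 -> continuity_pt x t /\ continuity_pt h t)
    by (intros t Ht; exact (crv_cont G D e t Ht)).
  destruct (functional_choice
              (fun y t => 0 <= t <= 1 /\ h t = clamp (h 0) (h 1) y)) as [tau Htau].
  { intros y.
    destruct (f_interv_is_interv h 0 1 (clamp (h 0) (h 1) y)) as [t Ht];
      [lra | apply clamp_in; lra | intros t Ht; apply Hcont, Ht |].
    exists t; exact Ht. }
  assert (Hrange : forall t, 0 <= t <= 1 -> h 0 <= h t <= h 1)
    by (intros t Ht; split; apply (increasing_le _ _ _ Hincr); lra).
  assert (Htau_h : forall t, 0 <= t <= 1 -> tau (h t) = t).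
  { intros t Ht. destruct (Htau (h t)) as [T E].
    rewrite clamp_id in E by (apply Hrange, Ht).
    apply Rle_antisym; apply (increasing_le_inv _ _ _ Hincr); lra. }
  exists (fun y => x (tau y)). split; [lra|]. split.
  - intros y. apply (continuity_pt_comp tau x).
    + exact (continuity_clamped_inverse h 0 1 Hincr tau Htau y).
    + apply Hcont, Htau.
  - intros p. split.
    + intros [t [Ht ->]]. fold (h t) (x t). rewrite Htau_h by exact Ht.
      split; [apply Hrange, Ht | reflexivity].
    + intros [Hy Hx]. exists (tau (snd p)). destruct (Htau (snd p)) as [T E].
      split; [exact T|]. rewrite clamp_id in E by exact Hy.
      destruct p as [px py]; simpl in *.
      rewrite Hx, (surjective_pairing (crv D e (tau py))).
      fold (x (tau py)) (h (tau py)). rewrite E. reflexivity.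
Qed.

Lemma last_cons {A : Type} (x d : A) (l : list A) : last (x :: l) d = last l x.
Proof.
  revert x d; induction l as [|y l IH]; intros x d; [reflexivity|].
  change (last (y :: l) d = last (y :: l) x). rewrite !IH. reflexivity.
Qed.

Definition ybot {G : digraph} (D : upward_planar_drawing G) (P : dpath G) : R :=
  snd (pos D (pstart P)).

Definition ytop {G : digraph} (D : upward_planar_drawing G) (P : dpath G) : R :=
  snd (pos D (pend P)).

Definition yspan {G : digraph} (D : upward_planar_drawing G) (P : dpath G) (z : R)
  : Prop := ybot D P <= z <= ytop D P.

Lemma tgt_in_edge_pts {G : digraph} (D : upward_planar_drawing G) (e : edge G) :
  edge_pts D e (pos D (tgt G e)).
Proof. exists 1. split; [lra|]. symmetry; apply crv_tgt. Qed.

Lemma pts_cons {G : digraph} (D : upward_planar_drawing G) (e : edge G)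
  (es : list (edge G)) (p : point) :
  pts D (mkPath (src G e) (e :: es)) p <->
  edge_pts D e p \/ pts D (mkPath (tgt G e) es) p.
Proof.
  unfold pts, edge_pts; simpl. split.
  - intros [->|[f [[<-|Hf] Ht]]].
    + left. exists 0. split; [lra|]. symmetry; apply crv_src.
    + left. exact Ht.
    + right. right. exists f. split; assumption.
  - intros [Ht|[->|[f [Hf Ht]]]].
    + right. exists e. split; [left; reflexivity | exact Ht].
    + right. exists e. split; [left; reflexivity | apply tgt_in_edge_pts].
    + right. exists f. split; [right; exact Hf | exact Ht].
Qed.

Lemma path_ygraph {G : digraph} (D : upward_planar_drawing G) (P : dpath G) :
  chain G (pstart P) (pedges P) -> exists X, ygraph (pts D P) (ybot D P) (ytop D P) X.
Proof.
  destruct P as [v es]. unfold ybot, ytop, pend; simpl.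
  revert v; induction es as [|e es IH]; intros v Hc.
  - exists (fun _ => fst (pos D v)).
    apply ygraph_point. intros p. unfold pts; simpl.
    split; [intros [->|[f [[] _]]]; reflexivity | now left].
  - destruct Hc as [<- Hc]. destruct (IH _ Hc) as [X2 H2].
    destruct (edge_ygraph D e) as [X1 H1]. rewrite crv_src, crv_tgt in H1.
    simpl map; rewrite last_cons.
    eexists. apply (ygraph_glue _ _ _ _ _ _ _ _ (pts_cons D e es) H1 H2).
    rewrite <- (ygraph_fst _ _ _ _ _ H1 (tgt_in_edge_pts D e)).
    apply (ygraph_fst _ _ _ _ _ H2). now left.
Qed.

Lemma chain_src_in {G : digraph} (v : vert G) (es : list (edge G)) (e : edge G) :
  chain G v es -> In e es -> In (src G e) (v :: map (tgt G) es).
Proof.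
  revert v; induction es as [|f es IH]; intros v Hc Hin; [destruct Hin|].
  destruct Hc as [Hs Hc], Hin as [<-|Hin].
  - left; symmetry; exact Hs.
  - right. exact (IH _ Hc Hin).
Qed.

Lemma pts_vertex_or_interior {G : digraph} (D : upward_planar_drawing G)
  (P : dpath G) (p : point) :
  chain G (pstart P) (pedges P) -> pts D P p ->
  (exists u, In u (pverts P) /\ p = pos D u) \/
  (exists e, In e (pedges P) /\ exists t, 0 < t < 1 /\ p = crv D e t).
Proof.
  intros Hc [->|[e [He [t [Ht ->]]]]].
  - left. exists (pstart P). split; [left|]; reflexivity.
  - destruct (Req_dec t 0) as [->|H0]; [|destruct (Req_dec t 1) as [->|H1]].
    + left. exists (src G e). split; [exact (chain_src_in _ _ _ Hc He) | apply crv_src].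
    + left. exists (tgt G e). split; [right; apply in_map, He | apply crv_tgt].
    + right. exists e. split; [exact He|]. exists t. split; [lra | reflexivity].
Qed.

Lemma pts_disjoint {G : digraph} (D : upward_planar_drawing G) (P Q : dpath G)
  (p : point) :
  chain G (pstart P) (pedges P) -> chain G (pstart Q) (pedges Q) -> vdisjoint P Q ->
  pts D P p -> pts D Q p -> False.
Proof.
  intros HcP HcQ Hd HP HQ.
  destruct (pts_vertex_or_interior D P p HcP HP) as [[u [Hu ->]]|[e [He [s [Hs ->]]]]];
  destruct (pts_vertex_or_interior D Q _ HcQ HQ) as [[w [Hw E]]|[f [Hf [t [Ht E]]]]].
  - apply pos_inj in E as ->. exact (Hd w Hu Hw).
  - exact (crv_novertex G D f u t Ht (eq_sym E)).
  - exact (crv_novertex G D e w s Hs E).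
  - destruct (classic (e = f)) as [<-|Hne].
    + apply (Hd (tgt G e)); right; apply in_map; assumption.
    + destruct (crv_noncross G D e f s t Hne ltac:(lra) ltac:(lra) E) as [[H|H] _]; lra.
Qed.

Lemma prec_ex_lt {G : digraph} (D : upward_planar_drawing G) (Q P : dpath G)
  (XQ XP : R -> R) :
  ygraph (pts D Q) (ybot D Q) (ytop D Q) XQ -> ygraph (pts D P) (ybot D P) (ytop D P) XP ->
  prec D Q P -> exists z, yspan D Q z /\ yspan D P z /\ XQ z < XP z.
Proof.
  intros HQ HP [_ [p [Hp [_ [Hspan Hleft]]]]].
  fold (ybot D Q) (ytop D Q) in Hspan.
  rewrite Rmin_left, Rmax_right in Hspan by apply (ygraph_le _ _ _ _ HQ).
  exists (snd p). split; [exact Hspan|]. split; [exact (ygraph_snd _ _ _ _ _ HP Hp)|].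
  rewrite <- (ygraph_fst _ _ _ _ _ HP Hp).
  exact (Hleft _ (ygraph_mem _ _ _ _ _ HQ Hspan) eq_refl).
Qed.

Lemma prec_of_lt {G : digraph} (D : upward_planar_drawing G) (Q P : dpath G)
  (XQ XP : R -> R) (z : R) :
  ygraph (pts D Q) (ybot D Q) (ytop D Q) XQ -> ygraph (pts D P) (ybot D P) (ytop D P) XP ->
  vdisjoint Q P -> yspan D Q z -> yspan D P z -> XQ z < XP z -> prec D Q P.
Proof.
  intros HQ HP Hd HzQ HzP Hlt. split; [exact Hd|].
  exists (XP z, z). split; [exact (ygraph_mem _ _ _ _ _ HP HzP)|]. split.
  - intros Hq. pose proof (ygraph_fst _ _ _ _ _ HQ Hq). simpl in *; lra.
  - unfold RightSet. fold (ybot D Q) (ytop D Q).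
    rewrite Rmin_left, Rmax_right by apply (ygraph_le _ _ _ _ HQ).
    split; [exact HzQ|]. intros q Hq Hqz. simpl in Hqz.
    rewrite (ygraph_fst _ _ _ _ _ HQ Hq), Hqz. exact Hlt.
Qed.

(* A sign change of [XP - XQ] on the common heights would be a common point. *)
Lemma vdisjoint_lt_stable {G : digraph} (D : upward_planar_drawing G) (Q P : dpath G)
  (XQ XP : R -> R) (z1 z2 : R) :
  chain G (pstart Q) (pedges Q) -> chain G (pstart P) (pedges P) -> vdisjoint Q P ->
  ygraph (pts D Q) (ybot D Q) (ytop D Q) XQ -> ygraph (pts D P) (ybot D P) (ytop D P) XP ->
  yspan D Q z1 -> yspan D P z1 -> yspan D Q z2 -> yspan D P z2 ->
  XQ z1 < XP z1 -> XQ z2 < XP z2.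
Proof.
  intros HcQ HcP Hd HQ HP H1Q H1P H2Q H2P Hlt.
  assert (Hin : forall z, yspan D Q z -> yspan D P z ->
            Rmax (ybot D Q) (ybot D P) <= z <= Rmin (ytop D Q) (ytop D P)).
  { intros z [] []. split; [apply Rmax_lub | apply Rmin_glb]; assumption. }
  cut (0 < XP z2 - XQ z2); [lra|].
  apply (continuity_sign_stable (fun y => XP y - XQ y)
           (Rmax (ybot D Q) (ybot D P)) (Rmin (ytop D Q) (ytop D P)) z1);
    [ apply continuity_minus; [apply HP | apply HQ]
    | | apply Hin; assumption | apply Hin; assumption | lra ].
  intros z Hz Hzero.
  assert (HzQ : yspan D Q z) by (pose proof (Rmax_l (ybot D Q) (ybot D P));
                                 pose proof (Rmin_l (ytop D Q) (ytop D P)); split; lra).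
  assert (HzP : yspan D P z) by (pose proof (Rmax_r (ybot D Q) (ybot D P));
                                 pose proof (Rmin_r (ytop D Q) (ytop D P)); split; lra).
  apply (pts_disjoint D Q P (XQ z, z) HcQ HcP Hd (ygraph_mem _ _ _ _ _ HQ HzQ)).
  replace (XQ z) with (XP z) by lra. exact (ygraph_mem _ _ _ _ _ HP HzP).
Qed.

Lemma prec_lt {G : digraph} (D : upward_planar_drawing G) (Q P : dpath G)
  (XQ XP : R -> R) (z : R) :
  chain G (pstart Q) (pedges Q) -> chain G (pstart P) (pedges P) ->
  ygraph (pts D Q) (ybot D Q) (ytop D Q) XQ -> ygraph (pts D P) (ybot D P) (ytop D P) XP ->
  prec D Q P -> yspan D Q z -> yspan D P z -> XQ z < XP z.
Proof.
  intros HcQ HcP HQ HP Hprec HzQ HzP.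
  destruct (prec_ex_lt D Q P XQ XP HQ HP Hprec) as [z' [HzQ' [HzP' Hlt]]].
  exact (vdisjoint_lt_stable D Q P XQ XP z' z HcQ HcP (proj1 Hprec) HQ HP
           HzQ' HzP' HzQ HzP Hlt).
Qed.

Fixpoint walk {T : Type} (rel : T -> T -> Prop) (x : T) (l : list T) : Prop :=
  match l with
  | [] => True
  | y :: l' => rel x y /\ walk rel y l'
  end.

Lemma walk_app {T : Type} (rel : T -> T -> Prop) (x : T) (l1 l2 : list T) :
  walk rel x (l1 ++ l2) <-> walk rel x l1 /\ walk rel (last l1 x) l2.
Proof.
  revert x; induction l1 as [|y l1 IH]; intros x; cbn [app walk]; [simpl; tauto|].
  rewrite IH, last_cons. tauto.
Qed.

Lemma walk_snoc {T : Type} (rel : T -> T -> Prop) (x y : T) (l : list T) :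
  walk rel x (l ++ [y]) <-> walk rel x l /\ rel (last l x) y.
Proof. rewrite walk_app; simpl; tauto. Qed.

Lemma clos_trans_walk {T : Type} (rel : T -> T -> Prop) (x y : T) :
  clos_trans T rel x y -> exists l, walk rel x (l ++ [y]).
Proof.
  induction 1 as [x y Hxy|x y z _ [l1 H1] _ [l2 H2]].
  - exists []. simpl; tauto.
  - exists (l1 ++ y :: l2).
    replace ((l1 ++ y :: l2) ++ [z]) with ((l1 ++ [y]) ++ l2 ++ [z])
      by (rewrite <- !app_assoc; reflexivity).
    apply walk_app. rewrite last_last. split; assumption.
Qed.

Lemma cycle_rotate {T : Type} (rel : T -> T -> Prop) (x m : T) (l : list T) :
  walk rel x (l ++ [x]) -> In m (x :: l) ->
  exists l', length l' = length l /\ incl l' (x :: l) /\ walk rel m (l' ++ [m]).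
Proof.
  intros Hc [<-|Hm]; [exists l; split; [|split; [apply incl_tl, incl_refl|]]; auto|].
  apply in_split in Hm as [l1 [l2 ->]].
  exists (l2 ++ x :: l1). split; [rewrite !length_app; simpl; lia|]. split.
  { intros w Hw. apply in_app_or in Hw as [Hw|[<-|Hw]]; [right | left | right];
      auto using in_or_app, in_cons. }
  rewrite <- app_assoc in Hc |- *. simpl in Hc |- *.
  apply walk_app in Hc as [H1 [Hm H2]]. apply walk_snoc in H2 as [H2 Hx].
  apply walk_app. split; [exact H2|]. simpl. split; [exact Hx|].
  apply walk_snoc. split; assumption.
Qed.

Lemma list_argmin {T : Type} (f : T -> R) (x : T) (l : list T) :
  exists m, In m (x :: l) /\ forall w, In w (x :: l) -> f m <= f w.
Proof.
  revert x; induction l as [|y l IH]; intros x.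
  - exists x. split; [left; reflexivity|]. intros w [<-|[]]; lra.
  - destruct (IH y) as [m [Hm Hmin]]. destruct (Rle_dec (f x) (f m)).
    + exists x. split; [left; reflexivity|].
      intros w [<-|Hw]; [lra|]. specialize (Hmin w Hw); lra.
    + exists m. split; [right; exact Hm|]. intros w [<-|Hw]; [lra | exact (Hmin w Hw)].
Qed.

Section IntervalCycles.

Variables (T : Type) (rel : T -> T -> Prop) (lo hi : T -> R).

Hypothesis rel_overlap : forall x y, rel x y ->
  exists z, lo x <= z <= hi x /\ lo y <= z <= hi y.

Hypothesis rel_trans_at : forall x y w z, rel x y -> rel y w ->
  lo x <= z <= hi x -> lo y <= z <= hi y -> lo w <= z <= hi w -> rel x w.

(* Both neighbours of the element with the lowest top reach that height, so it
   can be bypassed. *)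
Lemma cycle_shorten (m : T) (l : list T) :
  l <> [] -> (forall w, In w l -> hi m <= hi w) -> walk rel m (l ++ [m]) ->
  exists x l', (length l' < length l)%nat /\ walk rel x (l' ++ [x]).
Proof.
  intros Hne Hmin Hc. destruct (exists_last Hne) as [l' [p ->]].
  apply walk_snoc in Hc as [Hc Hpm]. rewrite last_last in Hpm.
  exists p, l'. split; [rewrite length_app; simpl; lia|].
  assert (Hp : hi m <= hi p) by (apply Hmin, in_or_app; right; left; reflexivity).
  destruct (l' ++ [p]) as [|q rest] eqn:E; [destruct l'; discriminate|].
  destruct Hc as [Hmq Hc]. split; [|exact Hc].
  assert (Hq : hi m <= hi q) by (apply Hmin; left; reflexivity).
  destruct (rel_overlap _ _ Hpm) as [z1 [Hz1p Hz1m]].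
  destruct (rel_overlap _ _ Hmq) as [z2 [Hz2m Hz2q]].
  apply (rel_trans_at p m q (hi m)); [exact Hpm | exact Hmq | lra | lra | lra].
Qed.

Lemma cycle_has_loop (n : nat) (x : T) (l : list T) :
  (length l < n)%nat -> walk rel x (l ++ [x]) -> exists y, rel y y.
Proof.
  revert x l; induction n as [|n IH]; intros x l Hlen Hc; [lia|].
  destruct l as [|y l]; [exists x; exact (proj1 Hc)|].
  destruct (list_argmin hi x (y :: l)) as [m [Hm Hmin]].
  destruct (cycle_rotate rel x m (y :: l) Hc Hm) as [l' [Hlen' [Hincl Hc']]].
  destruct (cycle_shorten m l') as [x' [l'' [Hlen'' Hc'']]].
  - intros ->; discriminate.
  - intros w Hw. exact (Hmin w (Hincl w Hw)).
  - exact Hc'.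
  - exact (IH x' l'' ltac:(lia) Hc'').
Qed.

Lemma clos_trans_has_loop (x : T) : clos_trans T rel x x -> exists y, rel y y.
Proof.
  intros H. destruct (clos_trans_walk rel x x H) as [l Hl].
  exact (cycle_has_loop (S (length l)) x l (Nat.lt_succ_diag_r _) Hl).
Qed.

End IntervalCycles.

Section PathOrder.

Variables (G : digraph) (D : upward_planar_drawing G) (PP : dpath G -> Prop).
Hypothesis PP_paths : forall P, PP P -> is_dpath P.
Hypothesis PP_disjoint : forall P Q, PP P -> PP Q -> P <> Q -> vdisjoint P Q.

Lemma PP_chain (P : dpath G) : PP P -> chain G (pstart P) (pedges P).
Proof. intros HP; exact (proj1 (PP_paths P HP)). Qed.

Lemma PP_ygraph (P : dpath G) :
  PP P -> exists X, ygraph (pts D P) (ybot D P) (ytop D P) X.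
Proof. intros HP; exact (path_ygraph D P (PP_chain P HP)). Qed.

Lemma prec_in_overlap (Q P : dpath G) :
  prec_in D PP Q P -> exists z, yspan D Q z /\ yspan D P z.
Proof.
  intros [HQ [HP Hprec]].
  destruct (PP_ygraph Q HQ) as [XQ GQ], (PP_ygraph P HP) as [XP GP].
  destruct (prec_ex_lt D Q P XQ XP GQ GP Hprec) as [z [HzQ [HzP _]]].
  exists z; split; assumption.
Qed.

Lemma prec_in_trans_at (P M Q : dpath G) (z : R) :
  prec_in D PP P M -> prec_in D PP M Q ->
  yspan D P z -> yspan D M z -> yspan D Q z -> prec_in D PP P Q.
Proof.
  intros [HP [HM HPM]] [_ [HQ HMQ]] HzP HzM HzQ.
  destruct (PP_ygraph P HP) as [XP GP], (PP_ygraph M HM) as [XM GM],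
    (PP_ygraph Q HQ) as [XQ GQ].
  pose proof (prec_lt D P M XP XM z (PP_chain P HP) (PP_chain M HM) GP GM HPM HzP HzM).
  pose proof (prec_lt D M Q XM XQ z (PP_chain M HM) (PP_chain Q HQ) GM GQ HMQ HzM HzQ).
  destruct (classic (P = Q)) as [<-|Hne].
  - pose proof (ygraph_unique _ _ _ z _ _ GP GQ HzP). lra.
  - split; [exact HP|]. split; [exact HQ|].
    apply (prec_of_lt D P Q XP XQ z GP GQ (PP_disjoint P Q HP HQ Hne) HzP HzQ).
    lra.
Qed.

End PathOrder.

Theorem lemma8 (G : digraph) (D : upward_planar_drawing G)
  (PP : dpath G -> Prop)
  (Hpaths : forall P, PP P -> is_dpath P)
  (Hdisj : forall P Q, PP P -> PP Q -> P <> Q -> vdisjoint P Q) :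
  StrictOrder (prec_star_in D PP).
Proof.
  split.
  - intros A HA.
    destruct (clos_trans_has_loop (dpath G) (prec_in D PP) (ybot D) (ytop D)
                (prec_in_overlap G D PP Hpaths)
                (prec_in_trans_at G D PP Hpaths Hdisj) A HA) as [P [_ [_ [Hd _]]]].
    exact (Hd (pstart P) (or_introl eq_refl) (or_introl eq_refl)).
  - intros A B C HAB HBC. exact (t_trans _ _ A B C HAB HBC).
Qed.
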